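(* For $\mathfrak X_1,\mathfrak X_2,\mathfrak X_3\in\mathbb M^{GHPU}$, $\mathbb d^{GHPU}(\mathfrak X_1,\mathfrak X_3)\le\mathbb d^{GHPU}(\mathfrak X_1,\mathfrak X_2)+\mathbb d^{GHPU}(\mathfrak X_2,\mathfrak X_3)$.
   Context: $\mathbb M^{GHPU}$: 4-tuples $(X,d,\mu,\eta)$ with $(X,d)$ compact metric, $\mu$ finite Borel, $\eta:\mathbb R\to X$ continuous such that for each $\epsilon>0$ there is $T>0$ with $d(\eta(\pm t),\eta(\pm T))\le\epsilon$ for $t\ge T$. $\mathbb d^{GHPU}(\mathfrak X_1,\mathfrak X_2)$ is the infimum over compact metric spaces $(W,D)$ and isometric embeddings $\iota_i:X_i\to W$ of the $D$-Hausdorff distance between $\iota_1(X_1),\iota_2(X_2)$ plus the $D$-Prokhorov distance between $(\iota_1)_*\mu_1,(\iota_2)_*\mu_2$ plus $\sup_tD(\iota_1\eta_1(t),\iota_2\eta_2(t))$. *)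

From mathcomp Require Import all_boot all_order all_algebra.
From mathcomp Require Import all_classical all_reals all_analysis.
Set Implicit Arguments. Unset Strict Implicit. Unset Printing Implicit Defensive.
Import Order.TTheory GRing.Theory Num.Theory.
Import numFieldNormedType.Exports.
Local Open Scope classical_set_scope.
Local Open Scope ring_scope.

Section GHPU_defs.
Variable R : realType.

Definition is_metric (X : Type) (d : X -> X -> R) : Prop :=
  [/\ forall x y, 0 <= d x y,
      forall x y, d x y = 0 <-> x = y,
      forall x y, d x y = d y x &
      forall x y z, d x z <= d x y + d y z].

Definition oball (X : Type) (d : X -> X -> R) (x : X) (r : R) : set X :=
  [set y | d x y < r].

Definition dopen (X : Type) (d : X -> X -> R) (U : set X) : Prop :=
  forall x, U x -> exists2 r : R, 0 < r & oball d x r `<=` U.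

Definition dborel (X : Type) (d : X -> X -> R) : set (set X) :=
  <<s [set U | dopen d U] >>.

Definition dcompact (X : Type) (d : X -> X -> R) : Prop :=
  forall C : set (set X), (forall U, C U -> dopen d U) ->
    setT `<=` \bigcup_(U in C) U ->
    exists2 F : set (set X), finite_set F & F `<=` C /\ setT `<=` \bigcup_(U in F) U.

(** finite (nonnegative, real-valued) Borel measure on (X,d);
    only its values on Borel sets are meaningful *)
Definition finite_borel_measure (X : Type) (d : X -> X -> R) (mu : set X -> R)
  : Prop :=
  [/\ mu set0 = 0,
      forall A, dborel d A -> 0 <= mu A &
      forall F : nat -> set X, (forall n, dborel d (F n)) -> trivIset setT F ->
        (fun n => \sum_(0 <= i < n) mu (F i)) @ \oo --> mu (\bigcup_i F i)].

Definition curve_continuous (X : Type) (d : X -> X -> R) (eta : R -> X) : Prop :=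
  forall t (e : R), 0 < e -> exists2 del : R, 0 < del &
    forall s, `|s - t| < del -> d (eta s) (eta t) < e.

Definition curve_ends (X : Type) (d : X -> X -> R) (eta : R -> X) : Prop :=
  forall e : R, 0 < e -> exists2 T : R, 0 < T &
    forall t, T <= t -> d (eta t) (eta T) <= e /\ d (eta (- t)) (eta (- T)) <= e.

Record GHPU := MkGHPU {
  gh_X : Type;
  gh_d : gh_X -> gh_X -> R;
  gh_mu : set gh_X -> R;
  gh_eta : R -> gh_X;
  gh_metric : is_metric gh_d;
  gh_compact : dcompact gh_d;
  gh_measure : finite_borel_measure gh_d gh_mu;
  gh_cont : curve_continuous gh_d gh_eta;
  gh_ends : curve_ends gh_d gh_eta }.

Definition isometric_embedding (X W : Type) (d : X -> X -> R)
  (D : W -> W -> R) (i : X -> W) : Prop :=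
  forall x y, D (i x) (i y) = d x y.

Definition nbhd_set (W : Type) (D : W -> W -> R) (A : set W) (e : R) : set W :=
  [set w | exists2 a, A a & D w a < e].

Definition hausdorff_dist (W : Type) (D : W -> W -> R) (A B : set W) : R :=
  inf [set e : R | 0 < e /\ A `<=` nbhd_set D B e /\ B `<=` nbhd_set D A e].

Definition pushforward (X W : Type) (i : X -> W) (mu : set X -> R) : set W -> R :=
  fun B => mu (i @^-1` B).

Definition prokhorov_dist (W : Type) (D : W -> W -> R) (nu1 nu2 : set W -> R) : R :=
  inf [set e : R | 0 < e /\ forall A, dborel D A ->
          nu1 A <= nu2 (nbhd_set D A e) + e /\ nu2 A <= nu1 (nbhd_set D A e) + e].

Definition uniform_dist (W : Type) (D : W -> W -> R) (f g : R -> W) : R :=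
  sup [set D (f t) (g t) | t in [set: R]].

Definition dGHPU (X1 X2 : GHPU) : R :=
  inf [set r : R | exists (W : Type) (D : W -> W -> R)
                          (i1 : gh_X X1 -> W) (i2 : gh_X X2 -> W),
     [/\ is_metric D, dcompact D,
         isometric_embedding (@gh_d X1) D i1,
         isometric_embedding (@gh_d X2) D i2 &
         r = hausdorff_dist D (range i1) (range i2)
             + prokhorov_dist D (pushforward i1 (@gh_mu X1)) (pushforward i2 (@gh_mu X2))
             + uniform_dist D (i1 \o @gh_eta X1) (i2 \o @gh_eta X2)]].

End GHPU_defs.

(* Given embeddings of X1, X2 into W and of X2, X3 into W', glue X1 and X3
   along the cross-distance c(x1, x3) = inf_x2 (D(x1, x2) + D'(x2, x3)).  This
   makes X1 + X3 a pseudometric space with compact metric quotient, in which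
   points, sets, measures or curves that are close through X2 stay close: each
   of the Hausdorff, Prokhorov and uniform terms of the gluing is at most the
   sum of the corresponding terms in W and W'.  Taking infima gives the
   triangle inequality. *)

From Pilot Require Import Defs.
From mathcomp Require Import all_boot all_order all_algebra.
From mathcomp Require Import all_classical all_reals all_analysis.
From mathcomp Require Import finmap lra.
Set Implicit Arguments. Unset Strict Implicit. Unset Printing Implicit Defensive.
Import Order.TTheory GRing.Theory Num.Theory numFieldNormedType.Exports.
Local Open Scope classical_set_scope.
Local Open Scope ring_scope.

Section InfPositive.
Variable R : realType.
Implicit Types (P : R -> Prop) (A B C : set R).

Lemma inf_pos_ge0 P : 0 <= inf [set e | 0 < e /\ P e].
Proof.
have [[e [e0 Pe]]|/nonemptyPn ->] := pselect ([set e | 0 < e /\ P e] !=set0).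
  by apply: lb_le_inf => [|x [x0 _]]; [exists e | exact: ltW].
by rewrite inf0.
Qed.

Lemma has_inf_pos P : [set e | 0 < e /\ P e] !=set0 -> has_inf [set e | 0 < e /\ P e].
Proof. by split=> //; exists 0 => e [e0 _]; exact: ltW. Qed.

Lemma le_inf_add A B C : has_inf A -> has_inf B ->
  (forall a b, A a -> B b -> inf C <= a + b) -> inf C <= inf A + inf B.
Proof.
move=> hA hB le_sum; rewrite -inf_sumE //; apply: lb_le_inf.
  by have [[[a Aa] _] [[b Bb] _]] := (hA, hB); exists (a + b), a => //; exists b.
by move=> _ [a Aa [b Bb <-]]; exact: le_sum.
Qed.

End InfPositive.

Section Borel.
Variables (R : realType) (X : Type) (d : X -> X -> R).

Lemma dborel_open U : dopen d U -> dborel d U.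
Proof. exact: sub_sigma_algebra. Qed.

Lemma dborelT : dborel d setT.
Proof. by apply: dborel_open => x _; exists 1. Qed.

Lemma dborelD A B : dborel d A -> dborel d B -> dborel d (A `\` B).
Proof.
move=> bA bB; have bC E : dborel d E -> dborel d (~` E).
  by move=> bE; rewrite -setTD; exact: sigma_algebraCD.
rewrite setDE -[A]setCK -setCU; apply: (bC); rewrite -bigcup2E.
by apply: sigma_algebra_bigcup => -[|[|n]] /=; [exact: bC | | exact: sigma_algebra0].
Qed.

End Borel.

Section MetricSpace.
Variables (R : realType) (X : Type) (d : X -> X -> R).
Hypothesis md : is_metric d.

Lemma oball_open x r : dopen d (oball d x r).
Proof.
have [_ _ _ dtri] := md; move=> y dxy; exists (r - d x y); first by rewrite subr_gt0.
by move=> z dyz; have := dtri x y z; rewrite /oball /= in dxy dyz *; lra.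
Qed.

Lemma nbhd_set_open A e : dopen d (nbhd_set d A e).
Proof.
have [_ _ dsym dtri] := md; move=> y [a Aa dya].
exists (e - d y a); first by rewrite subr_gt0.
move=> z dyz; exists a => //; have := dtri z y a; rewrite /oball /= dsym in dyz; lra.
Qed.

Lemma dcompact_bounded x0 : dcompact d -> exists M, forall x, d x0 x <= M.
Proof.
move=> cd; have [d_ge0 _ _ _] := md; pose ball n := oball d x0 n%:R.
have [|x _|F finF [Fball cov]] := cd (range ball).
- by move=> _ [n _ <-]; exact: oball_open.
- by exists (ball (Num.bound (d x0 x))); [exact: imageT | exact: archi_boundP].
have /choice [idx idxP] U : exists n, F U -> U = ball n.
  have [/Fball [n _ <-]|] := pselect (F U); first by exists n.
  by exists 0%N.
have [S SE] := finite_fsetP.1 (finite_image idx finF).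
exists (\max_(n <- S) n)%:R => x; have [U FU Ux] := cov x I.
rewrite (idxP U FU) /ball /oball /= in Ux; apply/ltW/(lt_le_trans Ux).
rewrite ler_nat; apply: leq_bigmax_seq => //.
by have : [set` S] (idx U) by rewrite -SE; exists U.
Qed.

End MetricSpace.

Section FiniteBorelMeasure.
Variables (R : realType) (X : Type) (d : X -> X -> R) (mu : set X -> R).
Hypothesis hmu : finite_borel_measure d mu.

Lemma finite_borel_measure_ge0 A : dborel d A -> 0 <= mu A.
Proof. by case: hmu => _ + _; apply. Qed.

Lemma finite_borel_measureU A B : dborel d A -> dborel d B -> A `&` B = set0 ->
  mu (A `|` B) = mu A + mu B.
Proof.
move=> bA bB AB0; have [mu0 _ mu_sigma] := hmu.
have bAB n : dborel d (bigcup2 A B n) by case: n => [|[|n]] //=; exact: sigma_algebra0.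
have := mu_sigma _ bAB; rewrite -trivIset_bigcup2 bigcup2E => /(_ AB0) cvAB.
rewrite -(cvg_lim _ cvAB) //; apply: cvg_lim => //.
apply: cvg_near_cst; near=> n.
have n2 : (2 <= n)%N by near: n; exists 2%N.
rewrite (big_cat_nat _ n2) //= 2?big_nat_recl //= big_geq // addr0 big1_seq ?addr0 //.
by move=> [|[|i]] //=; rewrite mem_index_iota.
Unshelve. all: by end_near.
Qed.

Lemma le_finite_borel_measure A B : dborel d A -> dborel d B -> A `<=` B ->
  mu A <= mu B.
Proof.
move=> bA bB AB; rewrite -(setUIDK B A) (setIidr AB).
rewrite finite_borel_measureU ?lerDl ?finite_borel_measure_ge0 //; try exact: dborelD.
by rewrite setDE setICA setICr setI0.
Qed.

End FiniteBorelMeasure.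

Section IsometricEmbedding.
Variables (R : realType) (X W : Type) (dX : X -> X -> R) (D : W -> W -> R).
Variable f : X -> W.
Hypothesis f_iso : isometric_embedding dX D f.

Lemma dopen_preimage U : dopen D U -> dopen dX (f @^-1` U).
Proof.
move=> oU x Ufx; have [r r0 rU] := oU (f x) Ufx.
by exists r => // y dxy; apply: rU; rewrite /oball /= f_iso.
Qed.

Lemma dborel_preimage B : dborel D B -> dborel dX (f @^-1` B).
Proof.
move: B; apply: smallest_sub => [|U oU]; last exact: dborel_open (dopen_preimage oU).
split=> [|A bA|F bF]; first by rewrite preimage_set0; exact: sigma_algebra0.
- by rewrite setTD preimage_setC -setTD; exact: sigma_algebraCD.
- by rewrite preimage_bigcup; exact: sigma_algebra_bigcup.
Qed.

Lemma image_finite_subcover C : dcompact dX -> (forall U, C U -> dopen D U) ->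
  range f `<=` \bigcup_(U in C) U ->
  exists2 G, finite_set G & G `<=` C /\ range f `<=` \bigcup_(U in G) U.
Proof.
move=> cX oC cov; pose CX := preimage f @` C.
have [|x _|FX finFX [FXC covX]] := cX CX.
- by move=> _ [U CU <-]; exact/dopen_preimage/oC.
- by have [U CU Ufx] := cov (f x) (imageT f x); exists (f @^-1` U) => //; exists U.
have /choice [lift liftP] V : exists U, FX V -> C U /\ V = f @^-1` U.
  have [/FXC [U CU <-]|] := pselect (FX V); first by exists U.
  by exists set0.
exists (lift @` FX); first exact: finite_image.
split=> [_ [V FV <-]|_ [x _ <-]]; first by have [] := liftP V FV.
have [V FV Vx] := covX x I; exists (lift V); first by exists V.
by have [_ VE] := liftP V FV; rewrite VE in Vx.
Qed.

End IsometricEmbedding.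

Lemma dcompact_union_ranges (R : realType) (X Y W : Type) (dX : X -> X -> R)
    (dY : Y -> Y -> R) (D : W -> W -> R) (f : X -> W) (g : Y -> W) :
  isometric_embedding dX D f -> isometric_embedding dY D g ->
  dcompact dX -> dcompact dY -> range f `|` range g = setT -> dcompact D.
Proof.
move=> f_iso g_iso cX cY fgT C oC cov.
have [|GX finGX [GXC covX]] := image_finite_subcover f_iso cX oC.
  by move=> w _; exact: cov.
have [|GY finGY [GYC covY]] := image_finite_subcover g_iso cY oC.
  by move=> w _; exact: cov.
exists (GX `|` GY); first by rewrite finite_setU.
split=> [U [/GXC|/GYC] //|w _].
have : (range f `|` range g) w by rewrite fgT.
by case=> [/covX|/covY] [U GU Uw]; exists U => //; [left | right].
Qed.

Section GluingCost.
Variables (R : realType) (X Y : Type) (dX : X -> X -> R) (dY : Y -> Y -> R).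

(* The four inequalities are the triangle inequalities mixing both sides for
   the distance on [X + Y] that extends [dX], [dY] by [c]. *)
Definition is_gluing_cost (c : X -> Y -> R) : Prop :=
  [/\ forall x x' y, c x y <= dX x x' + c x' y,
      forall x y y', c x y <= c x y' + dY y' y,
      forall x x' y, dX x x' <= c x y + c x' y &
      forall x y y', dY y y' <= c x y + c x y'].

Lemma gluing_cost_ge0 c : is_metric dX -> is_gluing_cost c -> forall x y, 0 <= c x y.
Proof.
move=> [_ dX0 _ _] [_ _ c3 _] x y; have := c3 x x y.
by rewrite (proj2 (dX0 x x) erefl); lra.
Qed.

End GluingCost.

Section Gluing.
Variables (R : realType) (X Y : Type) (dX : X -> X -> R) (dY : Y -> Y -> R).
Variable c : X -> Y -> R.
Hypotheses (mX : is_metric dX) (mY : is_metric dY) (hc : is_gluing_cost dX dY c).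

Definition glue_pdist (z z' : X + Y) : R :=
  match z, z' with
  | inl x, inl x' => dX x x'
  | inl x, inr y => c x y
  | inr y, inl x => c x y
  | inr y, inr y' => dY y y'
  end.

Lemma glue_pdist_sym z z' : glue_pdist z z' = glue_pdist z' z.
Proof. by have [_ _ sX _] := mX; have [_ _ sY _] := mY; case: z z' => ? [] ? /=. Qed.

Lemma glue_pdist_triangle z z' z'' : glue_pdist z z'' <= glue_pdist z z' + glue_pdist z' z''.
Proof.
have [_ _ sX tX] := mX; have [_ _ sY tY] := mY; have [c1 c2 c3 c4] := hc.
case: z z' z'' => [x|y] [x'|y'] [x''|y''] /=.
- exact: tX.
- exact: c1.
- exact: c3.
- by have := c2 x y'' y'; rewrite sY; lra.
- by have := c1 x'' x' y; rewrite sX; lra.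
- exact: c4.
- by have := c2 x'' y y'; rewrite sY; lra.
- exact: tY.
Qed.

Lemma glue_pdist_ge0 z z' : 0 <= glue_pdist z z'.
Proof.
have [dX0 _ _ _] := mX; have [dY0 _ _ _] := mY.
by case: z z' => ? [] ? /=; rewrite ?(gluing_cost_ge0 mX hc).
Qed.

Lemma glue_pdist_refl z : glue_pdist z z = 0.
Proof.
by have [_ hX _ _] := mX; have [_ hY _ _] := mY; case: z => ? /=; [apply/hX | apply/hY].
Qed.

(* The metric quotient of [glue_pdist]: a point is identified with its distance
   function [glue_pdist z]. *)
Definition glued := {h : X + Y -> R | exists z, h = glue_pdist z}.

Definition glue_point (z : X + Y) : glued := exist _ (glue_pdist z) (ex_intro _ z erefl).

Lemma glue_point_surj (w : glued) : exists z, w = glue_point z.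
Proof. by case: w => h [z hE]; exists z; apply: eq_exist. Qed.

Definition glued_dist (w w' : glued) : R := sval w (projT1 (cid (svalP w'))).

Lemma glued_dist_point z z' : glued_dist (glue_point z) (glue_point z') = glue_pdist z z'.
Proof.
rewrite /glued_dist /=; case: cid => z'' /= E.
by rewrite [LHS]glue_pdist_sym -E glue_pdist_sym.
Qed.

Lemma glued_dist_metric : is_metric glued_dist.
Proof.
split=> [w w'|w w'|w w'|w w' w''];
  have [z ->] := glue_point_surj w; have [z' ->] := glue_point_surj w';
  rewrite ?glued_dist_point.
- exact: glue_pdist_ge0.
- split=> [zz'0|[->]]; last exact: glue_pdist_refl.
  apply: eq_exist; apply/funext => u; apply/le_anti/andP; split.
    by have := glue_pdist_triangle z z' u; lra.
  by have := glue_pdist_triangle z' z u; rewrite (glue_pdist_sym z' z); lra.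
- exact: glue_pdist_sym.
- by have [z'' ->] := glue_point_surj w''; rewrite !glued_dist_point glue_pdist_triangle.
Qed.

Lemma gluing_exists : dcompact dX -> dcompact dY ->
  exists (W : Type) (D : W -> W -> R) (f : X -> W) (g : Y -> W),
  [/\ is_metric D, dcompact D, isometric_embedding dX D f,
      isometric_embedding dY D g & forall x y, D (f x) (g y) = c x y].
Proof.
move=> cX cY; exists glued, glued_dist, (glue_point \o inl), (glue_point \o inr).
have inl_iso : isometric_embedding dX glued_dist (glue_point \o inl).
  by move=> x x'; exact: glued_dist_point.
have inr_iso : isometric_embedding dY glued_dist (glue_point \o inr).
  by move=> y y'; exact: glued_dist_point.
split=> //; first exact: glued_dist_metric.
- apply: dcompact_union_ranges inl_iso inr_iso cX cY _.
  apply/seteqP; split=> // w _; have [[x|y] ->] := glue_point_surj w.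
  + by left; exists x.
  + by right; exists y.
- by move=> x y; exact: glued_dist_point.
Qed.

End Gluing.

Section GluingCostConstructions.
Variables (R : realType) (X1 X2 X3 : Type).
Variables (d1 : X1 -> X1 -> R) (d2 : X2 -> X2 -> R) (d3 : X3 -> X3 -> R).
Hypotheses (m1 : is_metric d1) (m2 : is_metric d2).

Lemma embedding_gluing_cost (W : Type) (D : W -> W -> R) (i1 : X1 -> W) (i2 : X2 -> W) :
  is_metric D -> isometric_embedding d1 D i1 -> isometric_embedding d2 D i2 ->
  is_gluing_cost d1 d2 (fun x y => D (i1 x) (i2 y)).
Proof.
move=> [_ _ Dsym Dtri] i1_iso i2_iso; split=> [x x' y|x y y'|x x' y|x y y'].
- by rewrite -i1_iso; exact: Dtri.
- by rewrite -i2_iso; exact: Dtri.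
- by rewrite -i1_iso (Dsym (i1 x')); exact: Dtri.
- by rewrite -i2_iso (Dsym (i1 x)); exact: Dtri.
Qed.

Lemma wedge_gluing_cost (p1 : X1) (p2 : X2) :
  is_gluing_cost d1 d2 (fun x y => d1 x p1 + d2 p2 y).
Proof.
have [d1_ge0 _ s1 t1] := m1; have [d2_ge0 _ s2 t2] := m2.
split=> [x x' y|x y y'|x x' y|x y y'].
- by have := t1 x x' p1; lra.
- by have := t2 p2 y' y; lra.
- by have := t1 x p1 x'; have := d2_ge0 p2 y; rewrite (s1 p1 x'); lra.
- by have := t2 y p2 y'; have := d1_ge0 x p1; rewrite (s2 y p2); lra.
Qed.

Definition compose_cost (c12 : X1 -> X2 -> R) (c23 : X2 -> X3 -> R) x z : R :=
  inf (range (fun y => c12 x y + c23 y z)).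

Variables (c12 : X1 -> X2 -> R) (c23 : X2 -> X3 -> R).
Hypotheses (h12 : is_gluing_cost d1 d2 c12) (h23 : is_gluing_cost d2 d3 c23).

Lemma compose_cost_le x y z : compose_cost c12 c23 x z <= c12 x y + c23 y z.
Proof.
apply: ge_inf; last exact: imageT.
exists 0 => _ [y' _ <-].
by rewrite addr_ge0 ?(gluing_cost_ge0 m1 h12) ?(gluing_cost_ge0 m2 h23).
Qed.

Lemma compose_cost_ge (y0 : X2) a x z :
  (forall y, a <= c12 x y + c23 y z) -> a <= compose_cost c12 c23 x z.
Proof.
move=> le_a; apply: lb_le_inf => [|_ [y _ <-]]; last exact: le_a.
by exists (c12 x y0 + c23 y0 z), y0.
Qed.

Lemma compose_gluing_cost (y0 : X2) : is_gluing_cost d1 d3 (compose_cost c12 c23).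
Proof.
have [c1 c2 c3 c4] := h12; have [c1' c2' c3' c4'] := h23.
split=> [x x' z|x z z'|x x' z|x z z'].
- rewrite -lerBlDl; apply: (compose_cost_ge y0) => y; rewrite lerBlDl.
  by have := compose_cost_le x y z; have := c1 x x' y; lra.
- rewrite -lerBlDr; apply: (compose_cost_ge y0) => y; rewrite lerBlDr.
  by have := compose_cost_le x y z; have := c2' y z z'; lra.
- rewrite -lerBlDl; apply: (compose_cost_ge y0) => y'; rewrite lerBlDl -lerBlDr.
  apply: (compose_cost_ge y0) => y; rewrite lerBlDr.
  by have := c3 x x' y; have := c2 x' y y'; have := c3' y' y z; lra.
- rewrite -lerBlDl; apply: (compose_cost_ge y0) => y'; rewrite lerBlDl -lerBlDr.
  apply: (compose_cost_ge y0) => y; rewrite lerBlDr.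
  by have := c4' y z z'; have := c1' y y' z'; have := c4 x y y'; lra.
Qed.

End GluingCostConstructions.

Section CandidateDistances.
Variables (R : realType) (W : Type) (D : W -> W -> R).
Hypotheses (mD : is_metric D) (cD : dcompact D).

Lemma hausdorff_candidates_nonempty (A B : set W) : A !=set0 -> B !=set0 ->
  [set e | 0 < e /\ A `<=` nbhd_set D B e /\ B `<=` nbhd_set D A e] !=set0.
Proof.
move=> [a0 Aa0] [b0 Bb0]; have [D0 _ Dsym Dtri] := mD.
have [M DM] := dcompact_bounded mD a0 cD; have M0 := le_trans (D0 a0 a0) (DM a0).
exists (2 * M + 1); split; first lra.
split=> [a Aa|b Bb]; [exists b0 | exists a0] => //.
- by have := Dtri a a0 b0; have := DM a; have := DM b0; rewrite (Dsym a a0); lra.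
- by have := DM b; rewrite Dsym; lra.
Qed.

Lemma uniform_dist_ge (f g : R -> W) t : D (f t) (g t) <= uniform_dist D f g.
Proof.
have [_ _ Dsym Dtri] := mD; have [M DM] := dcompact_bounded mD (f 0) cD.
apply: sup_upper_bound; last by exists t.
split; first by exists (D (f 0) (g 0)), 0.
exists (M + M) => _ [s _ <-].
have := Dtri (f s) (f 0) (g s); have := DM (f s); have := DM (g s).
by rewrite (Dsym (f s) (f 0)); lra.
Qed.

End CandidateDistances.

Definition prokhorov_dominated (R : realType) (W : Type) (D : W -> W -> R)
    (nu1 nu2 : set W -> R) (e : R) : Prop :=
  forall A, dborel D A -> nu1 A <= nu2 (nbhd_set D A e) + e.

Section PushforwardMeasures.
Variables (R : realType) (X1 X2 W : Type) (d1 : X1 -> X1 -> R) (d2 : X2 -> X2 -> R).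
Variables (mu1 : set X1 -> R) (mu2 : set X2 -> R) (D : W -> W -> R).
Variables (i1 : X1 -> W) (i2 : X2 -> W).
Hypotheses (mD : is_metric D) (hmu1 : finite_borel_measure d1 mu1)
  (hmu2 : finite_borel_measure d2 mu2)
  (i1_iso : isometric_embedding d1 D i1) (i2_iso : isometric_embedding d2 D i2).

Lemma prokhorov_candidates_nonempty :
  [set e | 0 < e /\ forall A, dborel D A ->
     Defs.pushforward i1 mu1 A <= Defs.pushforward i2 mu2 (nbhd_set D A e) + e /\
     Defs.pushforward i2 mu2 A <= Defs.pushforward i1 mu1 (nbhd_set D A e) + e] !=set0.
Proof.
have mu1T := finite_borel_measure_ge0 hmu1 (@dborelT _ _ d1).
have mu2T := finite_borel_measure_ge0 hmu2 (@dborelT _ _ d2).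
exists (mu1 setT + mu2 setT + 1); split=> [|A bA]; first lra.
have bN := dborel_open (nbhd_set_open mD (A := A) (e := mu1 setT + mu2 setT + 1)).
have le1 := le_finite_borel_measure hmu1 (dborel_preimage i1_iso bA) (@dborelT _ _ d1)
  (@subsetT _ _).
have le2 := le_finite_borel_measure hmu2 (dborel_preimage i2_iso bA) (@dborelT _ _ d2)
  (@subsetT _ _).
have N1 := finite_borel_measure_ge0 hmu1 (dborel_preimage i1_iso bN).
have N2 := finite_borel_measure_ge0 hmu2 (dborel_preimage i2_iso bN).
by rewrite /Defs.pushforward; split; lra.
Qed.

Lemma prokhorov_dominated_preimage e r A :
  prokhorov_dominated D (Defs.pushforward i1 mu1) (Defs.pushforward i2 mu2) e -> 0 < r ->
  dborel d1 A -> mu1 A <= mu2 (i2 @^-1` nbhd_set D (nbhd_set D (i1 @` A) r) e) + e.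
Proof.
move=> dom r0 bA; have [_ D0 _ _] := mD.
have oN := nbhd_set_open mD (A := i1 @` A) (e := r).
have sub : A `<=` i1 @^-1` nbhd_set D (i1 @` A) r.
  by move=> x Ax; exists (i1 x); [exists x | rewrite (proj2 (D0 _ _) erefl)].
have := le_finite_borel_measure hmu1 bA (dborel_preimage i1_iso (dborel_open oN)) sub.
by have := dom _ (dborel_open oN); rewrite /Defs.pushforward; lra.
Qed.

End PushforwardMeasures.

Section ProkhorovComposition.
Variables (R : realType) (X1 X2 X3 W W' W'' : Type).
Variables (d1 : X1 -> X1 -> R) (d2 : X2 -> X2 -> R) (d3 : X3 -> X3 -> R).
Variables (D : W -> W -> R) (D' : W' -> W' -> R) (D'' : W'' -> W'' -> R).
Variables (i1 : X1 -> W) (i2 : X2 -> W) (j2 : X2 -> W') (j3 : X3 -> W').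
Variables (k1 : X1 -> W'') (k3 : X3 -> W'').
Hypotheses (mD : is_metric D) (mD' : is_metric D') (mD'' : is_metric D'').
Hypotheses (i1_iso : isometric_embedding d1 D i1) (i2_iso : isometric_embedding d2 D i2).
Hypotheses (j2_iso : isometric_embedding d2 D' j2) (j3_iso : isometric_embedding d3 D' j3).
Hypotheses (k1_iso : isometric_embedding d1 D'' k1) (k3_iso : isometric_embedding d3 D'' k3).
Variables (mu1 : set X1 -> R) (mu2 : set X2 -> R) (mu3 : set X3 -> R).
Hypotheses (hmu1 : finite_borel_measure d1 mu1) (hmu2 : finite_borel_measure d2 mu2)
  (hmu3 : finite_borel_measure d3 mu3).
(* [nbhd_set D A e] bounds distances from the point to [A], hence this orientation. *)
Hypothesis coupling : forall x1 x2 x3,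
  D'' (k3 x3) (k1 x1) <= D' (j3 x3) (j2 x2) + D (i2 x2) (i1 x1).

Lemma prokhorov_dominated_comp e e' r : 0 < r ->
  prokhorov_dominated D (Defs.pushforward i1 mu1) (Defs.pushforward i2 mu2) e ->
  prokhorov_dominated D' (Defs.pushforward j2 mu2) (Defs.pushforward j3 mu3) e' ->
  prokhorov_dominated D'' (Defs.pushforward k1 mu1) (Defs.pushforward k3 mu3) (e + e' + r).
Proof.
move=> r0 dom12 dom23 A bA; rewrite /Defs.pushforward.
have [_ _ _ Dtri] := mD; have [_ _ _ D'tri] := mD'.
(* Images of Borel sets need not be Borel, hence the open [r / 2]-thickenings. *)
pose V2 := i2 @^-1` nbhd_set D (nbhd_set D (i1 @` (k1 @^-1` A)) (r / 2)) e.
pose V3 := j3 @^-1` nbhd_set D' (nbhd_set D' (j2 @` V2) (r / 2)) e'.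
have r2 : 0 < r / 2 by lra.
have oV2 : dopen d2 V2 by apply/(dopen_preimage i2_iso)/nbhd_set_open.
have oV3 : dopen d3 V3 by apply/(dopen_preimage j3_iso)/nbhd_set_open.
have le12 : mu1 (k1 @^-1` A) <= mu2 V2 + e :=
  prokhorov_dominated_preimage mD hmu1 i1_iso dom12 r2 (dborel_preimage k1_iso bA).
have le23 : mu2 V2 <= mu3 V3 + e' :=
  prokhorov_dominated_preimage mD' hmu2 j2_iso dom23 r2 (dborel_open oV2).
have V3_sub : V3 `<=` k3 @^-1` nbhd_set D'' A (e + e' + r).
  move=> x3 [b' [_ [x2 [b [_ [x1 Ax1 <-] bx1] x2b] <-] b'x2] x3b'].
  exists (k1 x1) => //; apply: le_lt_trans (coupling x1 x2 x3) _.
  by have := Dtri (i2 x2) b (i1 x1); have := D'tri (j3 x3) b' (j2 x2); lra.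
have oN : dopen d3 (k3 @^-1` nbhd_set D'' A (e + e' + r)).
  exact/(dopen_preimage k3_iso)/nbhd_set_open.
have := le_finite_borel_measure hmu3 (dborel_open oV3) (dborel_open oN) V3_sub.
lra.
Qed.

End ProkhorovComposition.

Section Coupling.
Variables (R : realType) (X1 X2 X3 W W' W'' : Type).
Variables (d1 : X1 -> X1 -> R) (d2 : X2 -> X2 -> R) (d3 : X3 -> X3 -> R).
Variables (D : W -> W -> R) (D' : W' -> W' -> R) (D'' : W'' -> W'' -> R).
Variables (i1 : X1 -> W) (i2 : X2 -> W) (j2 : X2 -> W') (j3 : X3 -> W').
Variables (k1 : X1 -> W'') (k3 : X3 -> W'').
Hypotheses (mD : is_metric D) (mD' : is_metric D') (mD'' : is_metric D'').
Hypotheses (i1_iso : isometric_embedding d1 D i1) (i2_iso : isometric_embedding d2 D i2).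
Hypotheses (j2_iso : isometric_embedding d2 D' j2) (j3_iso : isometric_embedding d3 D' j3).
Hypotheses (k1_iso : isometric_embedding d1 D'' k1) (k3_iso : isometric_embedding d3 D'' k3).
Hypothesis coupling : forall x1 x2 x3,
  D'' (k1 x1) (k3 x3) <= D (i1 x1) (i2 x2) + D' (j2 x2) (j3 x3).

Lemma coupling_sym x1 x2 x3 :
  D'' (k3 x3) (k1 x1) <= D' (j3 x3) (j2 x2) + D (i2 x2) (i1 x1).
Proof.
have [_ _ Dsym _] := mD; have [_ _ D'sym _] := mD'; have [_ _ D''sym _] := mD''.
by rewrite D''sym Dsym D'sym addrC.
Qed.

Lemma hausdorff_dist_coupling (x1 : X1) (x2 : X2) (x3 : X3) :
  dcompact D -> dcompact D' ->
  hausdorff_dist D'' (range k1) (range k3) <=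
  hausdorff_dist D (range i1) (range i2) + hausdorff_dist D' (range j2) (range j3).
Proof.
move=> cD cD'; apply: le_inf_add.
- by apply/has_inf_pos/hausdorff_candidates_nonempty => //; [exists (i1 x1) | exists (i2 x2)].
- by apply/has_inf_pos/hausdorff_candidates_nonempty => //; [exists (j2 x2) | exists (j3 x3)].
move=> e e' [e0 [N12 N21]] [e'0 [N23 N32]].
apply: ge_inf; first by exists 0 => x [x0 _]; exact: ltW.
split; first lra.
split=> _ [y _ <-].
- have [_ [y2 _ <-] d12] := N12 (i1 y) (imageT _ _).
  have [_ [y3 _ <-] d23] := N23 (j2 y2) (imageT _ _).
  by exists (k3 y3); [exact: imageT | have := coupling y y2 y3; lra].
- have [_ [y2 _ <-] d32] := N32 (j3 y) (imageT _ _).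
  have [_ [y1 _ <-] d21] := N21 (i2 y2) (imageT _ _).
  by exists (k1 y1); [exact: imageT | have := coupling_sym y1 y2 y; lra].
Qed.

Lemma uniform_dist_coupling (eta1 : R -> X1) (eta2 : R -> X2) (eta3 : R -> X3) :
  dcompact D -> dcompact D' ->
  uniform_dist D'' (k1 \o eta1) (k3 \o eta3) <=
  uniform_dist D (i1 \o eta1) (i2 \o eta2) + uniform_dist D' (j2 \o eta2) (j3 \o eta3).
Proof.
move=> cD cD'; apply: ge_sup; first by exists (D'' (k1 (eta1 0)) (k3 (eta3 0))), 0.
move=> _ [t _ <-] /=; apply: le_trans (coupling _ (eta2 t) _) _.
apply: lerD.
- exact: (uniform_dist_ge mD cD (i1 \o eta1) (i2 \o eta2)).
- exact: (uniform_dist_ge mD' cD' (j2 \o eta2) (j3 \o eta3)).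
Qed.

Lemma prokhorov_dist_coupling (mu1 : set X1 -> R) (mu2 : set X2 -> R) (mu3 : set X3 -> R) :
  finite_borel_measure d1 mu1 -> finite_borel_measure d2 mu2 -> finite_borel_measure d3 mu3 ->
  prokhorov_dist D'' (Defs.pushforward k1 mu1) (Defs.pushforward k3 mu3) <=
  prokhorov_dist D (Defs.pushforward i1 mu1) (Defs.pushforward i2 mu2) +
  prokhorov_dist D' (Defs.pushforward j2 mu2) (Defs.pushforward j3 mu3).
Proof.
move=> hmu1 hmu2 hmu3; apply: le_inf_add.
- exact/has_inf_pos/(prokhorov_candidates_nonempty mD hmu1 hmu2 i1_iso i2_iso).
- exact/has_inf_pos/(prokhorov_candidates_nonempty mD' hmu2 hmu3 j2_iso j3_iso).
move=> e e' [e0 dom] [e'0 dom']; apply/ler_addgt0Pr => r r0.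
have fwd := prokhorov_dominated_comp mD mD' mD'' i1_iso i2_iso j2_iso j3_iso k1_iso k3_iso
  hmu1 hmu2 hmu3 coupling_sym r0 (fun A bA => (dom A bA).1) (fun A bA => (dom' A bA).1).
have bwd := prokhorov_dominated_comp mD' mD mD'' j3_iso j2_iso i2_iso i1_iso k3_iso k1_iso
  hmu3 hmu2 hmu1 (fun x3 x2 x1 => coupling x1 x2 x3) r0
  (fun A bA => (dom' A bA).2) (fun A bA => (dom A bA).2).
apply: ge_inf; first by exists 0 => x [x0 _]; exact: ltW.
split=> [|A bA]; first lra.
by split; [exact: fwd | rewrite (addrC e); exact: bwd].
Qed.

End Coupling.

Section GHPU.
Variable R : realType.

Definition ghpu_cost (X1 X2 : GHPU R) (W : Type) (D : W -> W -> R)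
    (i1 : gh_X X1 -> W) (i2 : gh_X X2 -> W) : R :=
  hausdorff_dist D (range i1) (range i2)
  + prokhorov_dist D (Defs.pushforward i1 (@gh_mu R X1)) (Defs.pushforward i2 (@gh_mu R X2))
  + uniform_dist D (i1 \o @gh_eta R X1) (i2 \o @gh_eta R X2).

Definition ghpu_costs (X1 X2 : GHPU R) : set R :=
  [set r | exists (W : Type) (D : W -> W -> R) (i1 : gh_X X1 -> W) (i2 : gh_X X2 -> W),
     [/\ is_metric D, dcompact D, isometric_embedding (@gh_d R X1) D i1,
         isometric_embedding (@gh_d R X2) D i2 & r = ghpu_cost D i1 i2]].

Lemma dGHPUE (X1 X2 : GHPU R) : dGHPU X1 X2 = inf (ghpu_costs X1 X2).
Proof. by []. Qed.

Lemma ghpu_costs_ge0 (X1 X2 : GHPU R) r : ghpu_costs X1 X2 r -> 0 <= r.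
Proof.
move=> [W [D [i1 [i2 [mD cD _ _ ->]]]]]; have [D0 _ _ _] := mD.
rewrite /ghpu_cost !addr_ge0 ?inf_pos_ge0 //.
exact: le_trans (D0 _ _) (uniform_dist_ge mD cD _ _ 0).
Qed.

Lemma ghpu_costs_has_inf (X1 X2 : GHPU R) : has_inf (ghpu_costs X1 X2).
Proof.
split; last by exists 0 => r /ghpu_costs_ge0.
have m1 := @gh_metric R X1; have m2 := @gh_metric R X2.
have hc := wedge_gluing_cost m1 m2 (gh_eta X1 0) (gh_eta X2 0).
have [W [D [i1 [i2 [mD cD hi1 hi2 _]]]]] :=
  gluing_exists m1 m2 hc (@gh_compact R X1) (@gh_compact R X2).
by exists (ghpu_cost D i1 i2), W, D, i1, i2.
Qed.

Lemma dGHPU_le_costD (X1 X2 X3 : GHPU R) s s' :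
  ghpu_costs X1 X2 s -> ghpu_costs X2 X3 s' -> dGHPU X1 X3 <= s + s'.
Proof.
move=> [W [D [i1 [i2 [mD cD hi1 hi2 ->]]]]] [W' [D' [j2 [j3 [mD' cD' hj2 hj3 ->]]]]].
have m1 := @gh_metric R X1; have m2 := @gh_metric R X2; have m3 := @gh_metric R X3.
have hc12 := embedding_gluing_cost mD hi1 hi2.
have hc23 := embedding_gluing_cost mD' hj2 hj3.
have [W'' [D'' [k1 [k3 [mD'' cD'' hk1 hk3 Dk]]]]] :=
  gluing_exists m1 m3 (compose_gluing_cost m1 m2 hc12 hc23 (gh_eta X2 0))
    (@gh_compact R X1) (@gh_compact R X3).
have coupling x1 x2 x3 : D'' (k1 x1) (k3 x3) <= D (i1 x1) (i2 x2) + D' (j2 x2) (j3 x3).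
  by rewrite Dk; exact: (compose_cost_le m1 m2 hc12 hc23).
apply: (@le_trans _ _ (ghpu_cost D'' k1 k3)).
  by apply: ge_inf; [exists 0 => r /ghpu_costs_ge0 | exists W'', D'', k1, k3].
have := hausdorff_dist_coupling mD mD' mD'' coupling
  (gh_eta X1 0) (gh_eta X2 0) (gh_eta X3 0) cD cD'.
have := prokhorov_dist_coupling mD mD' mD'' hi1 hi2 hj2 hj3 hk1 hk3 coupling
  (@gh_measure R X1) (@gh_measure R X2) (@gh_measure R X3).
have := uniform_dist_coupling mD mD' coupling (gh_eta X1) (gh_eta X2) (gh_eta X3) cD cD'.
by rewrite /ghpu_cost; lra.
Qed.

End GHPU.

Theorem lemma2p4 (R : realType) (X1 X2 X3 : GHPU R) :
  dGHPU X1 X3 <= dGHPU X1 X2 + dGHPU X2 X3.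
Proof.
rewrite [dGHPU X1 X2]dGHPUE [dGHPU X2 X3]dGHPUE.
apply: le_inf_add; [exact: ghpu_costs_has_inf | exact: ghpu_costs_has_inf |].
exact: dGHPU_le_costD.
Qed.
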